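(* Let $\gamma = (\mathcal{E},\mathcal{F})$ be a context for SBA whose failure model $\mathcal{F}$ is a crash failure model (hard crash $\mathit{Crash}_t$ or communications crash $\mathit{ComCrash}_t$) or an omissions failure model (sending omissions $SO_t$, receiving omissions $RO_t$, or general omissions $GO_t$), and let $P$ be a decision protocol for $\gamma$ such that $\mathcal{N} \neq \emptyset$ is valid in the interpreted system $\mathcal{I}_{P,\gamma}$. If $\mathcal{I}_{P,\gamma} \models \text{SBA}(\mathcal{N})$, then $\mathcal{I}_{P,\gamma} \models \text{SBA}(\mathcal{A})$.
   Context: Setting: $n$ agents $\mathtt{Agt}=\{1,\dots,n\}$; each agent $i$ starts with a preferred value $\mathit{init}_i \in V$ and at each time chooses an action from $\{\mathtt{noop}\}\cup\{\mathtt{decide}_i(v) \mid v\in V\}$. A context $\gamma=(\mathcal{E},\mathcal{F})$ consists of an information exchange $\mathcal{E}$ (local states, initial states, message-sending function, state-update function for each agent) and a failure model $\mathcal{F}$ (environment states and a set of adversaries, each adversary specifying message-transmission perturbations, message-reception perturbations and local-state perturbations as functions of the round). A decision protocol $P$ maps each agent's local state to an action. $\mathcal{I}_{P,\gamma}$ is the synchronous interpreted system whose runs are generated from all initial global states (initial agent states together with an adversary) by running $P$ with $\mathcal{E}$ under the chosen adversary; a run is determined by its initial global state. Points are (run, time) pairs; $(r,m)\sim_i(r',m')$ iff $r_i(m)=r'_i(m')$. An agent has a fault in a round if the adversary alters a message it sends, alters a message it receives, or perturbs its local state in that round. $\mathcal{N}(r,m)$ is the set of agents that never have a fault in run $r$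 (nonfaulty agents); $\mathcal{A}(r,m)$ is the set of agents that have no fault in rounds $1,\dots,m$ of $r$ (not yet failed). In the crash models up to $t$ agents may crash (stop sending messages from some round on, possibly sending to only some agents in the crash round; in the hard crash model the crashed agent also enters a special state $\mathit{crashed}$); in $SO_t$/$RO_t$/$GO_t$ up to $t$ agents may have sending/receiving/both kinds of message omissions. For an indexical set $S$ of agents, the specification SBA($S$) consists of: Unique-Decision: each agent $i$ performs an action $\mathtt{decide}_i(v)$ (for some $v$) at most once; Simultaneous-Agreement($S$): if $i\in S$ and $i$ performs $\mathtt{decide}_i(v)$ then at the same time all $j\in S$ perform $\mathtt{decide}_j(v)$; Validity($S$): if $i\in S$ and $i$ performs $\mathtt{decide}_i(v)$ then some agent $j$ has $\mathit{init}_j=v$. $\mathcal{I}_{P,\gamma}\models \text{SBA}(S)$ means these hold at all points. *)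

From mathcomp Require Import all_boot.
Set Implicit Arguments. Unset Strict Implicit. Unset Printing Implicit Defensive.

(* Rounds are numbered 1, 2, ...; round k transforms the global
   state at time k-1 into the global state at time k. *)

Inductive action (V : Type) := noop | decide of V.
Arguments noop {V}.

Section SBA.
Variables (n : nat) (V L M : Type).

Record info_exchange := InfoExchange {
  ie_init    : 'I_n -> L -> Prop;
  ie_initval : 'I_n -> L -> V;
  ie_send    : 'I_n -> L -> action V -> 'I_n -> option M;
  ie_upd     : 'I_n -> L -> action V -> ('I_n -> option M) -> L
}.

(* An adversary: perturbations as functions of the round number.
   adv_tr k i j : transmission perturbation of the message sent by i to j in round k
   adv_rc k j i : reception perturbation of the message received by j from i in round k
   adv_ls k i   : perturbation of i's local state in round k *)
Record adversary := Adversary {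
  adv_tr : nat -> 'I_n -> 'I_n -> option M -> option M;
  adv_rc : nat -> 'I_n -> 'I_n -> option M -> option M;
  adv_ls : nat -> 'I_n -> L -> L
}.

Definition protocol := 'I_n -> L -> action V.

(* A run is determined by its initial global state: initial agent states
   together with an adversary (the environment state). *)
Record run := Run { run_init : 'I_n -> L; run_adv : adversary }.

Fixpoint state (E : info_exchange) (P : protocol) (r : run) (m : nat) : 'I_n -> L :=
  match m with
  | 0 => run_init r
  | k.+1 =>
      let s := state E P r k in
      let a := run_adv r in
      fun j => adv_ls a k.+1 j
        (ie_upd E j (s j) (P j (s j))
           (fun i => adv_rc a k.+1 j i
                       (adv_tr a k.+1 i j (ie_send E i (s i) (P i (s i)) j))))
  end.

Definition act E P r m (i : 'I_n) : action V := P i (state E P r m i).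

Definition initv (E : info_exchange) (r : run) (j : 'I_n) : V :=
  ie_initval E j (run_init r j).

Definition fault (a : adversary) (k : nat) (i : 'I_n) : Prop :=
  (exists j, adv_tr a k i j <> (fun x => x)) \/
  (exists j, adv_rc a k i j <> (fun x => x)) \/
  adv_ls a k i <> (fun x => x).

Definition indexical := run -> nat -> 'I_n -> Prop.

Definition Nset : indexical := fun r _ i => forall k, 0 < k -> ~ fault (run_adv r) k i.
Definition Aset : indexical := fun r m i => forall k, 0 < k <= m -> ~ fault (run_adv r) k i.

Inductive failure_model :=
  | HardCrash of nat & L   (* Crash_t, with the special state "crashed" *)
  | ComCrash  of nat
  | SendOm    of nat
  | RecvOm    of nat
  | GenOm     of nat.

Definition drop : option M -> option M := fun _ => None.

(* behaviour of agent i under a crash adversary, with crash round ci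
   (None = never crashes); hard = Some crashed for the hard crash model *)
Definition crash_behaviour (hard : option L) (a : adversary) (i : 'I_n)
    (ci : option nat) : Prop :=
  let ls_crash k := match hard with
                    | None => adv_ls a k i = (fun x => x)
                    | Some cs => adv_ls a k i = (fun _ => cs) end in
  (forall k j, adv_rc a k i j = (fun x => x)) /\
  match ci with
  | None => forall k, (forall j, adv_tr a k i j = (fun x => x)) /\
                      adv_ls a k i = (fun x => x)
  | Some c =>
      0 < c /\
      (forall k, k < c -> (forall j, adv_tr a k i j = (fun x => x)) /\
                          adv_ls a k i = (fun x => x)) /\
      ((forall j, adv_tr a c i j = (fun x => x) \/ adv_tr a c i j = drop) /\
       ls_crash c) /\
      (forall k, c < k -> (forall j, adv_tr a k i j = drop) /\ ls_crash k)
  end.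

Definition crash_adv (hard : option L) (t : nat) (a : adversary) : Prop :=
  exists c : 'I_n -> option nat,
    #|[set i | isSome (c i)]| <= t /\ forall i, crash_behaviour hard a i (c i).

Definition omission_adv (snd rcv : bool) (t : nat) (a : adversary) : Prop :=
  exists Fs : {set 'I_n}, #|Fs| <= t /\
    (forall k i j,
       (adv_tr a k i j = (fun x => x) \/ (snd /\ i \in Fs /\ adv_tr a k i j = drop)) /\
       (adv_rc a k i j = (fun x => x) \/ (rcv /\ i \in Fs /\ adv_rc a k i j = drop))) /\
    (forall k i, adv_ls a k i = (fun x => x)).

Definition adversaries (F : failure_model) (a : adversary) : Prop :=
  match F with
  | HardCrash t cs => crash_adv (Some cs) t a
  | ComCrash t => crash_adv None t a
  | SendOm t => omission_adv true false t a
  | RecvOm t => omission_adv false true t a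
  | GenOm t => omission_adv true true t a
  end.

Definition is_run (E : info_exchange) (F : failure_model) (r : run) : Prop :=
  (forall i, ie_init E i (run_init r i)) /\ adversaries F (run_adv r).

Definition SBA (E : info_exchange) (F : failure_model) (P : protocol)
    (S : indexical) : Prop :=
  forall r, is_run E F r ->
    (forall i m m' v v', act E P r m i = decide v -> act E P r m' i = decide v' ->
                         m = m') /\
    (forall m i v, S r m i -> act E P r m i = decide v ->
       forall j, S r m j -> act E P r m j = decide v) /\
    (forall m i v, S r m i -> act E P r m i = decide v -> exists j, initv E r j = v).

Definition N_nonempty_valid (E : info_exchange) (F : failure_model) : Prop :=
  forall r, is_run E F r -> forall m, exists i, Nset r m i.

End SBA.

(* Fix a run r and a time m.  Erase every perturbation of the agents of
   A(r,m), in all rounds: the resulting adversary is still admissible (it has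
   no more faulty agents, and their behaviour is untouched), it coincides
   with the old one on rounds 1..m, so the new run r' has the same initial
   values and the same global state at time m as r, and every agent of
   A(r,m) is nonfaulty in r'.  Simultaneous agreement and validity for N at
   (r',m) are therefore simultaneous agreement and validity for A at (r,m). *)

From Stdlib Require Import Classical ClassicalEpsilon FunctionalExtensionality.
From mathcomp Require Import all_boot.
Set Implicit Arguments. Unset Strict Implicit.

Section HealAgents.
Variables (n : nat) (V L M : Type).
Implicit Types (a : adversary n L M) (S : pred 'I_n) (r : run n L M).

Definition heal a S : adversary n L M :=
  Adversary (fun k i j => if S i then id else adv_tr a k i j)
            (fun k i j => if S i then id else adv_rc a k i j)
            (fun k i => if S i then id else adv_ls a k i).

Definition same_round a a' k :=
  [/\ adv_tr a k = adv_tr a' k, adv_rc a k = adv_rc a' k & adv_ls a k = adv_ls a' k].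

Lemma nofault_id a k i : ~ fault a k i ->
  [/\ forall j, adv_tr a k i j = id, forall j, adv_rc a k i j = id & adv_ls a k i = id].
Proof.
move=> no_fault; split.
- by move=> j; apply: NNPP => tr_j; apply: no_fault; left; exists j.
- by move=> j; apply: NNPP => rc_j; apply: no_fault; right; left; exists j.
- by apply: NNPP => ls_i; apply: no_fault; right; right.
Qed.

Lemma heal_nofault a S k i : S i -> ~ fault (heal a S) k i.
Proof. by move=> Si [[j []]|[[j []]|[]]]; rewrite /= Si. Qed.

Lemma same_round_heal a S k :
  (forall i, S i -> ~ fault a k i) -> same_round (heal a S) a k.
Proof.
move=> S_nofault.
split; apply: functional_extensionality => i /=; case Si: (S i) => //;
  have [tr_id rc_id ls_id] := nofault_id (S_nofault i Si).
- by apply: functional_extensionality => j; rewrite tr_id.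
- by apply: functional_extensionality => j; rewrite rc_id.
- by rewrite ls_id.
Qed.

Lemma state_same_rounds (E : info_exchange n V L M) (P : protocol n V L) r r' m :
  run_init r = run_init r' ->
  (forall k, 0 < k <= m -> same_round (run_adv r) (run_adv r') k) ->
  state E P r m = state E P r' m.
Proof.
move=> same_init; elim: m => [|m IHm] same_rounds //=.
have [-> -> ->] := same_rounds m.+1 (leqnn _).
suff same_upto_m k : 0 < k <= m -> same_round (run_adv r) (run_adv r') k.
  by rewrite IHm.
by case/andP=> k_gt0 k_le_m; apply: same_rounds; rewrite k_gt0 ltnW.
Qed.

Lemma crash_adv_heal hard t a S : crash_adv hard t a -> crash_adv hard t (heal a S).
Proof.
case=> c [card_c crash_c]; exists (fun i => if S i then None else c i); split.
  apply: leq_trans card_c; apply: subset_leq_card; apply/subsetP => i.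
  by rewrite !inE; case: (S i).
by move=> i; have := crash_c i; rewrite /crash_behaviour /=; case: (S i).
Qed.

Lemma omission_adv_heal snd rcv t a S :
  omission_adv snd rcv t a -> omission_adv snd rcv t (heal a S).
Proof.
case=> Fs [card_Fs [msg_om ls_id]]; exists Fs; split=> //; split=> [k i j|k i] /=.
  by case: (S i); [split; left | exact: msg_om].
by case: (S i).
Qed.

Lemma adversaries_heal (F : failure_model L) a S :
  adversaries F a -> adversaries F (heal a S).
Proof.
case: F => [t cs|t|t|t|t]; [exact: crash_adv_heal|exact: crash_adv_heal|..];
  exact: omission_adv_heal.
Qed.

Lemma healed_run (E : info_exchange n V L M) (F : failure_model L)
    (P : protocol n V L) r m :
  is_run E F r ->
  exists2 r', is_run E F r' &
    [/\ initv E r' = initv E r, state E P r' m = state E P r m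
      & forall i, Aset r m i -> Nset r' m i].
Proof.
case=> init_ok adv_ok.
pose S i : bool := if excluded_middle_informative (Aset r m i) then true else false.
have S_Aset i : S i <-> Aset r m i by rewrite /S; case: excluded_middle_informative.
exists (Run (run_init r) (heal (run_adv r) S)).
  by split=> //; apply: adversaries_heal.
split=> // [|i /S_Aset Si k _]; last exact: heal_nofault.
apply: state_same_rounds => // k k_range.
by apply: same_round_heal => i /S_Aset; apply.
Qed.

End HealAgents.

Theorem corollary5 (n : nat) (V L M : Type) (E : info_exchange n V L M)
    (F : failure_model L) (P : protocol n V L) :
  N_nonempty_valid E F ->
  SBA E F P (@Nset n L M) ->
  SBA E F P (@Aset n L M).
Proof.
move=> _ sbaN r r_ok.
have [unique_dec _] := sbaN r r_ok.
split=> //; split=> m i v Ai i_dec;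
  have [r' r'_ok [same_init same_state healed]] := healed_run P m r_ok;
  have [_ [agreeN validN]] := sbaN r' r'_ok;
  have same_act : act E P r' m =1 act E P r m by move=> ?; rewrite /act same_state.
- move=> j Aj; rewrite -same_act.
  by apply: (agreeN m i v); rewrite ?same_act //; apply: healed.
- by rewrite -same_init; apply: (validN m i v); rewrite ?same_act //; apply: healed.
Qed.
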